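(* For every $\delta$ with $0<\delta<\gamma$ there exists an integer $K\ge1$ such that for every positive integer $B$, every pre-sorted online $B$-bounded space algorithm $ALG$ for the classic bin packing problem, and every positive integer $m$, there exists a sorted item sequence $I$ such that $OPT(I)=m$ and $ALG(I)>(\gamma-\delta)\cdot OPT(I)-B(K-1)$.
   Context: Define $\pi_1=2$ and $\pi_{i+1}=\pi_i(\pi_i-1)+1$ for $i\ge1$, and $\gamma=\sum_{i=1}^\infty\frac{1}{\pi_i-1}\approx1.69$. Classic bin packing: an item sequence $I=(a_1,\dots,a_n)\in(0,1]^n$ must be packed into bins of capacity $1$; $OPT(I)$ is the minimum number of non-empty bins, $ALG(I)$ the number used by $ALG$. $I$ is sorted if $a_1\ge\cdots\ge a_n$. A pre-sorted online algorithm first sorts the input in non-increasing order and then repeatedly packs the head (first) item of the currently remaining sorted sequence into a bin, each decision depending only on the items already packed and the current item, without seeing other remaining items. A bin is open if it contains an item and the algorithm may still pack items into it; closed bins never receive further items. A $B$-bounded space algorithm keeps at most $B$ open bins at any time. *)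

From HB Require Import structures.
From mathcomp Require Import all_boot all_order all_algebra.
From mathcomp Require Import all_classical all_reals all_analysis.
Set Implicit Arguments. Unset Strict Implicit. Unset Printing Implicit Defensive.
Import Order.TTheory GRing.Theory Num.Theory numFieldNormedType.Exports.
Local Open Scope ring_scope.

(* pi_seq i = pi_{i+1} :  pi_1 = 2, pi_{i+1} = pi_i (pi_i - 1) + 1 *)
Fixpoint pi_seq (i : nat) : nat :=
  match i with
  | 0 => 2
  | i'.+1 => (pi_seq i' * (pi_seq i' - 1) + 1)%N
  end.

Definition gamma (R : realType) : R :=
  limn (series (fun i : nat => ((pi_seq i)%:R - 1 : R)^-1) : R^nat).

Section BinPacking.
Variable R : realType.

Definition items_ok (I : seq R) : bool := all (fun a => (0 < a) && (a <= 1)) I.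

Definition sorted_input (I : seq R) : bool := sorted (fun a b => b <= a) I.

Definition packable (I : seq R) (k : nat) : Prop :=
  exists f : nat -> nat,
    (forall i, (i < size I)%N -> (f i < k)%N) /\
    (forall b, (b < k)%N ->
       \sum_(i < size I | f i == b) I`_i <= 1).

Definition is_OPT (I : seq R) (m : nat) : Prop :=
  packable I m /\ forall k, (k < m)%N -> ~ packable I k.

(* State of an online algorithm: the bins opened so far, in order of opening;
   each bin is (its items, is it still open?). *)
Definition state := seq (seq R * bool).

(* A decision for the current item: (j, C) means pack the item into bin j
   (j = number of bins so far means: open a new bin), and afterwards close
   the bins whose indices are in C. *)
Definition decision := (nat * seq nat)%type.

(* A pre-sorted online algorithm: the decision depends only on the items
   already packed (in order) and on the current item. *)
Definition online_alg := seq R -> R -> decision.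

Definition load (b : seq R) : R := \sum_(y <- b) y.

(* One step; None if the decision is illegal or violates the B-bounded
   space requirement. *)
Definition step (B : nat) (st : state) (x : R) (d : decision) : option state :=
  let j := d.1 in
  let C := d.2 in
  let st1 :=
    if (j < size st)%N then
      let bo := nth ([::], false) st j in
      if bo.2 && (load bo.1 + x <= 1) then Some (set_nth ([::], false) st j (rcons bo.1 x, true))
      else None
    else if j == size st then Some (rcons st ([:: x], true)) else None in
  match st1 with
  | None => None
  | Some s1 =>
      let s2 := mkseq (fun i => let p := nth ([::], false) s1 i in
                                if i \in C then (p.1, false) else p) (size s1) in
      if (count (fun p => p.2) s2 <= B)%N then Some s2 else None
  end.

Fixpoint run_aux (B : nat) (A : online_alg) (past : seq R) (st : state) (I : seq R)
  : option state :=
  match I with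
  | [::] => Some st
  | x :: I' =>
      match step B st x (A past x) with
      | None => None
      | Some st' => run_aux B A (rcons past x) st' I'
      end
  end.

Definition run (B : nat) (A : online_alg) (I : seq R) : option state :=
  run_aux B A [::] [::] (sort (fun a b => b <= a) I).

Definition bounded_space_alg (B : nat) (A : online_alg) : Prop :=
  forall I : seq R, items_ok I -> run B A I <> None.

(* ALG(I) = number of bins used (all opened bins are non-empty) *)
Definition alg_cost (B : nat) (A : online_alg) (I : seq R) : nat :=
  match run B A I with Some st => size st | None => 0 end.

End BinPacking.

(* Put m items of each size hard_item t = 1/pi_seq t + eps, t < k, in
   decreasing order, where eps = 1/(k (pi_seq k - 1)).  Since
   sum_(t<k) 1/pi_seq t = 1 - 1/(pi_seq k - 1), one item of each size fills a
   bin exactly, so OPT = m (the m largest items exceed 1/2).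
   An online algorithm meets the sizes phase by phase.  As
   pi_seq t * hard_item t > 1, a bin takes at most pi_seq t - 1 items of
   phase t, and the at most B bins open when phase t starts can absorb at
   most B (pi_seq t - 1) of them; hence phase t opens at least
   m / (pi_seq t - 1) - B new bins.  Summing over t < k gives
   ALG >= m sum_(t<k) 1/(pi_seq t - 1) - k B, and the partial sums of this
   series tend to gamma. *)

From HB Require Import structures.
From mathcomp Require Import all_boot all_order all_algebra.
From mathcomp Require Import all_classical all_reals all_analysis.
From mathcomp Require Import zify ring lra.
Import Order.TTheory GRing.Theory Num.Theory numFieldNormedType.Exports.
Local Open Scope ring_scope.
Set Implicit Arguments. Unset Strict Implicit.

Lemma pi_seq_ge2 i : (2 <= pi_seq i)%N.
Proof. by elim: i => //= i IH; nia. Qed.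

Lemma pi_seq_nondecreasing : {homo pi_seq : i j / (i <= j)%N}.
Proof.
apply: homo_leq => [//|j i l|i]; first exact: leq_trans.
by have := pi_seq_ge2 i; rewrite /=; nia.
Qed.

Section Sylvester.
Variable R : realType.

Definition gamma_term (i : nat) : R := ((pi_seq i)%:R - 1)^-1.

Lemma natr_pi_seq_gt1 i : 1 < (pi_seq i)%:R :> R.
Proof. by rewrite ltr1n pi_seq_ge2. Qed.

Lemma gamma_term_gt0 i : 0 < gamma_term i.
Proof. by rewrite invr_gt0 subr_gt0 natr_pi_seq_gt1. Qed.

Lemma gamma_termS i : gamma_term i.+1 = gamma_term i / (pi_seq i)%:R.
Proof.
rewrite /gamma_term /= natrD natrM natrB ?(ltnW (pi_seq_ge2 i)) // addrK.
by rewrite invfM mulrC.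
Qed.

Lemma inv_pi_seq i : ((pi_seq i)%:R)^-1 = gamma_term i - gamma_term i.+1 :> R.
Proof.
have p_gt1 := natr_pi_seq_gt1 i.
rewrite gamma_termS /gamma_term; field.
by apply/andP; split; apply: lt0r_neq0; lra.
Qed.

Lemma sum_inv_pi_seq n : \sum_(i < n) ((pi_seq i)%:R)^-1 = 1 - gamma_term n.
Proof.
rewrite -(big_mkord xpredT (fun i => ((pi_seq i)%:R)^-1)).
rewrite (telescope_sumr_eq (fun i => - gamma_term i)) // => [|i _].
  by rewrite opprK addrC /gamma_term /= (_ : 2%:R - 1 = 1 :> R) ?invr1 //; lra.
by rewrite inv_pi_seq opprK addrC.
Qed.

Lemma series_gamma_term_le n : series gamma_term n <= 2 - 2 * gamma_term n.
Proof.
elim: n => [|n IH].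
  by rewrite /series /= big_geq // /gamma_term (_ : 2%:R - 1 = 1 :> R) ?invr1; lra.
rewrite seriesSr gamma_termS.
have p_ge2 : 2 <= (pi_seq n)%:R :> R by rewrite ler_nat pi_seq_ge2.
have u_ge0 := ltW (gamma_term_gt0 n).
have : gamma_term n / (pi_seq n)%:R <= gamma_term n / 2.
  rewrite ler_pM2l ?gamma_term_gt0 // lef_pV2 ?posrE //; lra.
lra.
Qed.

Lemma series_gamma_term_gt c : c < gamma R ->
  exists2 k, (0 < k)%N & c < series gamma_term k.
Proof.
move=> c_lt_gamma.
have nd : {homo series gamma_term : i j / (i <= j)%N >-> i <= j}.
  by apply: nondecreasing_series => n _ _; exact: ltW (gamma_term_gt0 n).
have cv : cvgn (series gamma_term : R^nat).
  apply: nondecreasing_is_cvgn => //; exists 2 => _ [n _ <-].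
  by have := series_gamma_term_le n; have := gamma_term_gt0 n; lra.
have [|N _ partial_ge] :=
  lt_lim nd cv (_ : (c + gamma R) / 2 < limn (series gamma_term : R^nat)).
  by change ((c + gamma R) / 2 < gamma R); lra.
by exists N.+1 => //; have := partial_ge N.+1 (leqnSn N) => /=; lra.
Qed.

End Sylvester.

Lemma sum_set_nth (T : Type) (d : T) (F : T -> nat) (s : seq T) j a :
  (j < size s)%N ->
  (\sum_(y <- set_nth d s j a) F y + F (nth d s j) = \sum_(y <- s) F y + F a)%N.
Proof.
move=> js; rewrite set_nthE js -[in RHS](cat_take_drop j s) (drop_nth d js).
by rewrite !big_cat !big_cons /=; lia.
Qed.

Section Simulation.
Variable R : realType.
Implicit Types (st : state R) (x : R) (p : nat).

Definition num_open st : nat := count (fun b => b.2) st.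

Definition nonneg_state st : Prop :=
  forall i, all (fun y => 0 <= y) (nth ([::], false) st i).1.

(* When p x > 1 a bin holds fewer than p items of size x, so an open bin can
   receive at most [slack p x b] more of them. *)
Definition slack p x (b : seq R * bool) : nat :=
  if b.2 then (p.-1 - count_mem x b.1)%N else 0.

Definition total_slack p x st : nat := (\sum_(b <- st) slack p x b)%N.

Definition place st x (j : nat) : option (state R) :=
  if (j < size st)%N then
    let b := nth ([::], false) st j in
    if b.2 && (load b.1 + x <= 1) then Some (set_nth ([::], false) st j (rcons b.1 x, true))
    else None
  else if j == size st then Some (rcons st ([:: x], true)) else None.

Definition close_bins (C : seq nat) st : state R :=
  mkseq (fun i => let b := nth ([::], false) st i in
                  if i \in C then (b.1, false) else b) (size st).

Lemma stepE B st x j C : step B st x (j, C) =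
  obind (fun s => if (num_open (close_bins C s) <= B)%N then Some (close_bins C s) else None)
        (place st x j).
Proof. by []. Qed.

Lemma count_mem_mulr_le_load (s : seq R) x :
  all (fun y => 0 <= y) s -> (count_mem x s)%:R * x <= load s.
Proof.
elim: s => [|y s IH] /=; first by rewrite /load big_nil mul0r.
move=> /andP [y_ge0 /IH]; rewrite /load big_cons natrD mulrDl.
by case: eqP => [->|_] /=; rewrite ?mul1r ?mul0r; lra.
Qed.

Lemma total_slack_le p x st : (total_slack p x st <= p.-1 * num_open st)%N.
Proof.
elim: st => [|b st IH]; first by rewrite /total_slack big_nil.
rewrite /total_slack big_cons /num_open /= mulnDr.
by apply: leq_add => //; rewrite /slack; case: b.2; rewrite ?muln1 ?leq_subr.
Qed.

Lemma close_bins_slack p x C st : nonneg_state st ->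
  [/\ nonneg_state (close_bins C st), size (close_bins C st) = size st &
      (total_slack p x (close_bins C st) <= total_slack p x st)%N].
Proof.
move=> nn; split; first (move=> i; case: (ltnP i (size st)) => i_lt).
- by rewrite nth_mkseq //=; case: ifP => _; exact: nn.
- by rewrite nth_default // size_mkseq.
- by rewrite size_mkseq.
rewrite /total_slack -[in X in (_ <= X)%N](mkseq_nth ([::], false) st) /mkseq !big_map.
by apply: leq_sum => i _ /=; case: ifP.
Qed.

Section Phase.
Variables (p : nat) (x : R).
Hypotheses (p_gt1 : (1 < p)%N) (x_gt0 : 0 < x) (px_gt1 : 1 < p%:R * x).

Lemma slack_place st j s : nonneg_state st -> place st x j = Some s ->
  nonneg_state s /\
  (total_slack p x s + 1 + p.-1 * size st <= total_slack p x st + p.-1 * size s)%N.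
Proof.
move=> nn; rewrite /place; case: ltnP => j_lt; last first.
  case: eqP => // _ [<-]; split.
    move=> i; rewrite nth_rcons; case: ifP => _; first exact: nn.
    by case: eqP => //= _; rewrite ltW.
  rewrite /total_slack -cats1 big_cat big_seq1 /slack /= eqxx size_cat /=; lia.
set b := nth _ st j; case: ifP => // /andP [b_open fits] [<-]; split.
  move=> i; rewrite nth_set_nth /=; case: eqP => [_|_]; last exact: nn.
  by rewrite all_rcons ltW ?nn.
have few_copies : ((count_mem x b.1).+1 < p)%N.
  rewrite -(ltr_nat R) -(ltr_pM2r x_gt0) -addn1 natrD mulrDl mul1r.
  apply: le_lt_trans px_gt1; apply: le_trans fits.
  by rewrite lerD2r -/b; exact: count_mem_mulr_le_load (nn j).
have := sum_set_nth ([::], false) (slack p x) (rcons b.1 x, true) j_lt.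
rewrite size_set_nth (maxn_idPr j_lt) /slack /= b_open -cats1 count_cat /= eqxx.
rewrite -/b -/(total_slack _ _ _) -/(total_slack _ _ _) addn0 /=; move: few_copies.
set c := count_mem x b.1; set T1 := total_slack _ _ (set_nth _ _ _ _); lia.
Qed.

Lemma slack_step B st d s : nonneg_state st -> step B st x d = Some s ->
  [/\ nonneg_state s, (num_open s <= B)%N &
      (total_slack p x s + 1 + p.-1 * size st <= total_slack p x st + p.-1 * size s)%N].
Proof.
case: d => j C nn; rewrite stepE.
case E: place => [s1|] //=; case: ifP => // open_le [<-].
have [nn1 slack1] := slack_place nn E.
have [nn2 size2 slack2] := close_bins_slack p x C nn1.
by split => //; rewrite size2; lia.
Qed.

Lemma slack_run_nseq B (A : online_alg R) past st s n :
  nonneg_state st -> (num_open st <= B)%N -> run_aux B A past st (nseq n x) = Some s ->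
  [/\ nonneg_state s, (num_open s <= B)%N &
      (total_slack p x s + n + p.-1 * size st <= total_slack p x st + p.-1 * size s)%N].
Proof.
elim: n past st => [|n IH] past st nn open_le /=; first by case=> <-; split => //; lia.
case E: step => [s1|] // run_s.
have [nn1 open1 slack1] := slack_step nn E.
have [nn2 open2 slack2] := IH _ _ nn1 open1 run_s.
by split => //; lia.
Qed.

Lemma new_bins_run_nseq B (A : online_alg R) past st s n :
  nonneg_state st -> (num_open st <= B)%N -> run_aux B A past st (nseq n x) = Some s ->
  [/\ nonneg_state s, (num_open s <= B)%N &
      n%:R / (p%:R - 1) - B%:R <= (size s)%:R - (size st)%:R :> R].
Proof.
move=> nn open_le run_s; have [nn1 open1 slack1] := slack_run_nseq nn open_le run_s.
split => //.
have bins : (n + p.-1 * size st <= p.-1 * B + p.-1 * size s)%N.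
  have := total_slack_le p x st; have := leq_mul2l p.-1 (num_open st) B.
  by rewrite open_le orbT; lia.
have p1_gt0 : 0 < p%:R - 1 :> R by rewrite subr_gt0 ltr1n.
rewrite lerBlDr ler_pdivrMr //.
move: bins; rewrite -(ler_nat R) !natrD !natrM -subn1 natrB ?(ltnW p_gt1) //.
nra.
Qed.

End Phase.

Lemma run_aux_cat B (A : online_alg R) past st s1 s2 :
  run_aux B A past st (s1 ++ s2) =
  obind (fun st' => run_aux B A (past ++ s1) st' s2) (run_aux B A past st s1).
Proof.
elim: s1 past st => [|y s1 IH] past st /=; first by rewrite cats0.
by case: step => //= st'; rewrite IH cat_rcons.
Qed.

Lemma size_run_phases B (A : online_alg R) n (p : nat -> nat) (x : nat -> R) k s :
  (forall t, 1 < p t)%N -> (forall t, 0 < x t) -> (forall t, 1 < (p t)%:R * x t) ->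
  run_aux B A [::] [::] (flatten [seq nseq n (x t) | t <- iota 0 k]) = Some s ->
  [/\ nonneg_state s, (num_open s <= B)%N &
      n%:R * \sum_(t < k) ((p t)%:R - 1)^-1 - (k * B)%:R <= (size s)%:R :> R].
Proof.
move=> p_gt1 x_gt0 px_gt1; elim: k s => [|k IH] s.
  by case=> <-; split=> [i||]; rewrite ?nth_nil //= big_ord0 mulr0 mul0n; lra.
move=> run_s; rewrite -addn1 iotaD map_cat flatten_cat /= cats0 run_aux_cat in run_s.
case E: run_aux run_s => [s1|] //= run_s.
have [nn1 open1 size1] := IH s1 E.
have [nn2 open2 size2] := new_bins_run_nseq (p_gt1 k) (x_gt0 k) (px_gt1 k) nn1 open1 run_s.
split => //; rewrite big_ord_recr /= mulrDr mulSn natrD.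
lra.
Qed.

End Simulation.

Lemma mkseq_divn (T : Type) (f : nat -> T) k m :
  mkseq (fun j => f (j %/ m)%N) (k * m) = flatten [seq nseq m (f t) | t <- iota 0 k].
Proof.
elim: k => [|k IH]; first by rewrite mul0n.
rewrite mulSnr /mkseq iotaD map_cat -/(mkseq _ _) IH.
rewrite -addn1 iotaD map_cat flatten_cat /= cats0; congr (_ ++ _).
apply: (@eq_from_nth _ (f k)) => [|j]; rewrite size_map size_iota ?size_nseq // => j_lt.
rewrite (nth_map 0) ?size_iota // nth_iota // nth_nseq j_lt add0n.
by rewrite divnMDl ?divn_small ?addn0 // (leq_ltn_trans _ j_lt).
Qed.

Lemma big_mod_class (V : nmodType) (F : nat -> V) k m b : (b < m)%N ->
  \sum_(0 <= j < k * m | (j %% m == b)%N) F (j %/ m)%N = \sum_(0 <= t < k) F t.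
Proof.
move=> b_lt; have m_gt0 : (0 < m)%N by case: m b_lt.
elim: k => [|k IH]; first by rewrite mul0n !big_geq.
rewrite mulSnr (@big_cat_nat _ _ _ (k * m)) ?leq_addr //= IH big_nat_recr //=.
congr (_ + _); rewrite -{1}(add0n (k * m)%N) big_addn addKn.
rewrite big_nat_cond (eq_bigl (fun j => (0 <= j < m)%N && (j == b))) => [|j /=]; last first.
  by case: (ltnP j m) => j_lt //=; rewrite addnC modnMDl modn_small.
rewrite -big_nat_cond big_nat1_eq b_lt /=.
by rewrite addnC divnMDl // divn_small // addn0.
Qed.

Lemma packable_large_items (R : realType) (I : seq R) n k :
  items_ok I -> (n <= size I)%N -> (forall j, (j < n)%N -> 2^-1 < I`_j) ->
  packable I k -> (n <= k)%N.
Proof.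
move=> ok n_le large [f [f_lt bin_le1]].
have fj (j : 'I_n) : (f j < k)%N by apply: f_lt; exact: leq_trans (ltn_ord j) n_le.
suff /leq_card : injective (fun j : 'I_n => Ordinal (fj j)) by rewrite !card_ord.
move=> a b /(congr1 val) /= f_ab; case: (eqVneq a b) => // a_neq_b; exfalso.
have a_lt : (a < size I)%N by exact: leq_trans (ltn_ord a) n_le.
have b_lt : (b < size I)%N by exact: leq_trans (ltn_ord b) n_le.
have item_ge0 (i : 'I_(size I)) : 0 <= I`_i.
  by have /andP [/ltW] := allP ok _ (mem_nth 0 (ltn_ord i)).
have := bin_le1 (f a) (fj a).
rewrite (bigD1 (Ordinal a_lt)) ?eqxx //= (bigD1 (Ordinal b_lt)) /=; last first.
  by rewrite -f_ab eqxx /=; apply: contraNneq a_neq_b => -[/val_inj ->].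
set rest := \sum_(i < _ | _) _; have : 0 <= rest by apply: sumr_ge0 => i _.
have := large a (ltn_ord a); have := large b (ltn_ord b); lra.
Qed.

Section HardInput.
Variables (R : realType) (k m : nat).
Hypotheses (k_gt0 : (0 < k)%N) (m_gt0 : (0 < m)%N).

Definition hard_item (t : nat) : R := ((pi_seq t)%:R)^-1 + gamma_term R k / k%:R.

Definition hard_input : seq R := mkseq (fun j => hard_item (j %/ m)%N) (k * m).

Lemma hard_item_gt0 t : 0 < hard_item t.
Proof.
rewrite addr_gt0 ?divr_gt0 ?gamma_term_gt0 ?ltr0n // invr_gt0.
by have := natr_pi_seq_gt1 R t; lra.
Qed.

Lemma pi_seq_hard_item_gt1 t : 1 < (pi_seq t)%:R * hard_item t.
Proof.
have p_gt0 : 0 < (pi_seq t)%:R :> R by have := natr_pi_seq_gt1 R t; lra.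
rewrite mulrDr mulfV ?gt_eqF // ltrDl mulr_gt0 // divr_gt0 ?gamma_term_gt0 //.
by rewrite ltr0n.
Qed.

Lemma hard_item_nonincreasing : {homo hard_item : s t / (s <= t)%N >-> t <= s}.
Proof.
move=> s t st; rewrite lerD2r lef_pV2 ?posrE ?ler_nat ?pi_seq_nondecreasing //.
  by have := natr_pi_seq_gt1 R t; lra.
by have := natr_pi_seq_gt1 R s; lra.
Qed.

Lemma sum_hard_item : \sum_(t < k) hard_item t = 1.
Proof.
rewrite big_split /= sum_inv_pi_seq sumr_const card_ord -[_ *+ k]mulr_natr divfK.
  by rewrite subrK.
by rewrite pnatr_eq0 -lt0n.
Qed.

Lemma hard_item_le1 t : (t < k)%N -> hard_item t <= 1.
Proof.
move=> t_lt; rewrite -sum_hard_item (bigD1 (Ordinal t_lt)) //= lerDl.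
by apply: sumr_ge0 => i _; exact: ltW (hard_item_gt0 i).
Qed.

Lemma size_hard_input : size hard_input = (k * m)%N.
Proof. exact: size_mkseq. Qed.

Lemma nth_hard_input j : (j < k * m)%N -> hard_input`_j = hard_item (j %/ m)%N.
Proof. exact: nth_mkseq. Qed.

Lemma hard_input_items_ok : items_ok hard_input.
Proof.
apply/allP => y /mapP [j]; rewrite mem_iota add0n => j_lt ->.
by rewrite hard_item_gt0 hard_item_le1 // ltn_divLR.
Qed.

Lemma hard_input_sorted : sorted_input hard_input.
Proof.
apply/(sortedP 0) => j; rewrite size_hard_input => j_lt.
rewrite !nth_hard_input; [|lia|lia].
by apply: hard_item_nonincreasing; apply: leq_div2r.
Qed.

Lemma hard_input_packable : packable hard_input m.
Proof.
exists (fun j => (j %% m)%N); split => [j _|b b_lt]; first by rewrite ltn_pmod.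
rewrite -(big_mkord (fun j => (j %% m)%N == b) (fun j => hard_input`_j)) size_hard_input.
rewrite big_nat_cond (eq_bigr (fun j => hard_item (j %/ m)%N)) => [|j].
  by rewrite -big_nat_cond big_mod_class // big_mkord sum_hard_item.
by case/andP=> /andP [_ j_lt] _; exact: nth_hard_input.
Qed.

Lemma hard_input_OPT : is_OPT hard_input m.
Proof.
split=> [|n n_lt packed]; first exact: hard_input_packable.
have m_le : (m <= k * m)%N by rewrite leq_pmull.
have large j : (j < m)%N -> 2^-1 < hard_input`_j.
  move=> j_lt; rewrite nth_hard_input ?divn_small //; last exact: leq_trans j_lt m_le.
  by rewrite /hard_item /= ltrDl divr_gt0 ?gamma_term_gt0 ?ltr0n.
have := packable_large_items hard_input_items_ok _ large packed.
by rewrite size_hard_input => /(_ m_le); rewrite leqNgt n_lt.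
Qed.

End HardInput.

Lemma run_sorted (R : realType) B (A : online_alg R) I :
  sorted_input I -> run B A I = run_aux B A [::] [::] I.
Proof. by move=> I_sorted; rewrite /run sorted_sort //; exact: rev_trans le_trans. Qed.

Unset Implicit Arguments. Set Strict Implicit.

Theorem theorem6 (R : realType) (delta : R) :
  0 < delta -> delta < gamma R ->
  exists K : nat, (1 <= K)%N /\
    forall (B : nat) (A : online_alg R), (0 < B)%N ->
      bounded_space_alg B A ->
      forall m : nat, (0 < m)%N ->
        exists I : seq R,
          items_ok I /\ sorted_input I /\ is_OPT I m /\
          (alg_cost B A I)%:R > (gamma R - delta) * m%:R - (B * (K - 1))%:R.
Proof.
move=> delta_gt0 _.
have [|k k_gt0 series_gt] := series_gamma_term_gt (_ : gamma R - delta < gamma R).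
  by rewrite ltrBlDr ltrDl.
exists k.+1; split => // B A _ A_ok m m_gt0.
exists (hard_input R k m); split; first exact: hard_input_items_ok.
split; first exact: hard_input_sorted.
split; first exact: hard_input_OPT.
have := A_ok _ (hard_input_items_ok R k_gt0 m_gt0).
rewrite /alg_cost run_sorted ?hard_input_sorted //.
case run_s: run_aux => [s|] // _; move: run_s; rewrite /hard_input mkseq_divn => run_s.
have [_ _] := size_run_phases pi_seq_ge2 (hard_item_gt0 R k_gt0)
  (pi_seq_hard_item_gt1 R k_gt0) run_s.
rewrite -(big_mkord xpredT (gamma_term R)) subn1 /= mulnC.
have : (gamma R - delta) * m%:R < m%:R * \sum_(0 <= t < k) gamma_term R t.
  by rewrite mulrC ltr_pM2l ?ltr0n //; exact: series_gt.
lra.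
Qed.
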